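(* Let $n\ge1$. For a word $w$ over $\{a,b\}$ the following are equivalent: (1) $w\in L^{\epsilon}_{\vdash_{\{a^nb,\,a^n\}}}$; (2) $|w|_a\equiv 0 \pmod n$ and every prefix $p$ of $w$ satisfies $|p|_a\ge n|p|_b$; (3) $w\in L^{\epsilon}_{\{a^nb,\,a^n\}}$. In particular $L^{\epsilon}_{\vdash_{\{a^nb,a^n\}}}=L^{\epsilon}_{\{a^nb,a^n\}}$.
   Context: For words $u,v$, the shuffle $u \sqcup\!\sqcup v$ is the set of all words $u_1v_1\cdots u_kv_k$ with $k\ge 1$, $u=u_1\cdots u_k$, $v=v_1\cdots v_k$ (pieces possibly empty). For a finite set $I$ of words, $v \vdash_I w$ means $w \in v \sqcup\!\sqcup u$ for some $u\in I$; $\vdash_I^*$ is its reflexive-transitive closure and $L^{\epsilon}_{\vdash_I}=\{w : \epsilon \vdash_I^* w\}$. The relation $\Rightarrow_I$ is defined by $xy\Rightarrow_I xuy$ for all words $x,y$ and $u\in I$ (insertion of a word of $I$ as a factor), $\Rightarrow^*_I$ is its reflexive-transitive closure, and $L^{\epsilon}_{I}=\{w:\epsilon\Rightarrow_I^* w\}$. *)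

From HB Require Import structures.
From mathcomp Require Import all_boot.
Set Implicit Arguments. Unset Strict Implicit. Unset Printing Implicit Defensive.

Inductive letter := a | b.
Definition letter_eqb (x y : letter) : bool :=
  match x, y with a, a | b, b => true | _, _ => false end.
Lemma letter_eqP : Equality.axiom letter_eqb.
Proof. by case; case; constructor. Qed.
HB.instance Definition _ := hasDecEq.Build letter letter_eqP.

Definition word := seq letter.

Definition occ (x : letter) (w : word) : nat := count_mem x w.

Fixpoint interleave (us vs : seq word) : word :=
  match us, vs with
  | u1 :: us', v1 :: vs' => u1 ++ v1 ++ interleave us' vs'
  | _, _ => [::]
  end.

Definition in_shuffle (w u v : word) : Prop :=
  exists us vs : seq word,
    [/\ 0 < size us, size us = size vs, flatten us = u, flatten vs = v
      & w = interleave us vs].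

Inductive rtc (R : word -> word -> Prop) : word -> word -> Prop :=
  | rtc_refl x : rtc R x x
  | rtc_step x y z : R x y -> rtc R y z -> rtc R x z.

(* v |-_I w  iff  w ∈ v ⧢ u for some u ∈ I *)
Definition shuf_step (I : seq word) (v w : word) : Prop :=
  exists2 u, u \in I & in_shuffle w v u.

Definition ins_step (I : seq word) (v w : word) : Prop :=
  exists x y u, [/\ u \in I, v = x ++ y & w = x ++ u ++ y].

Definition L_shuf (I : seq word) (w : word) : Prop := rtc (shuf_step I) [::] w.
Definition L_ins (I : seq word) (w : word) : Prop := rtc (ins_step I) [::] w.

Definition anb (n : nat) : word := nseq n a ++ [:: b].
Definition an (n : nat) : word := nseq n a.

From mathcomp Require Import all_boot zify.

(* Shuffle steps preserve "n | |w|_a and every prefix has at least n a's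
   per b": a step adds n a's, and every prefix of a shuffle of u and v is a
   rearrangement of a prefix of u followed by a prefix of v, so the prefix
   condition survives.  Conversely such a word arises by insertions: if it contains a
   b, the first b is preceded by at least n a's, and deleting a^n b there
   keeps the condition; otherwise it is a^m with n | m and a^n can be
   deleted.  As every insertion is a shuffle, the three languages agree. *)

Set Implicit Arguments.
Unset Strict Implicit.
Unset Printing Implicit Defensive.

Section ReflexiveTransitiveClosure.

Variable R : word -> word -> Prop.

Lemma rtc_snoc x y z : rtc R x y -> R y z -> rtc R x z.
Proof.
elim=> [u Ruz | u v t Ruv _ IH /IH]; first exact: rtc_step Ruz (rtc_refl _ _).
exact: rtc_step Ruv.
Qed.

Lemma rtc_mono (S : word -> word -> Prop) x y :
  (forall u v, R u v -> S u v) -> rtc R x y -> rtc S x y.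
Proof.
move=> RS; elim=> [u | u v t Ruv _ IH]; first exact: rtc_refl.
exact: rtc_step (RS _ _ Ruv) IH.
Qed.

Lemma rtc_inv (P : word -> Prop) x y :
  (forall u v, P u -> R u v -> P v) -> rtc R x y -> P x -> P y.
Proof. by move=> PR; elim=> // u v t Ruv _ IH /PR /(_ Ruv). Qed.

End ReflexiveTransitiveClosure.

Lemma ins_step_shuf_step I v w : ins_step I v w -> shuf_step I v w.
Proof.
case=> x [y [u [uI -> ->]]]; exists u => //.
by exists [:: x; y], [:: u; [::]]; split; rewrite //= !cats0.
Qed.

Lemma perm_interleave us vs : size us = size vs ->
  perm_eq (interleave us vs) (flatten us ++ flatten vs).
Proof.
elim: us vs => [|u us IH] [|v vs] //= [/IH perm_rest].
by rewrite -!catA perm_cat2l perm_sym perm_catCA perm_cat2l perm_sym.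
Qed.

Lemma take_size_addn_cat (T : Type) (s t : seq T) j :
  take (size s + j) (s ++ t) = s ++ take j t.
Proof. by rewrite takeD take_size_cat // drop_size_cat. Qed.

Lemma perm_take_interleave us vs i : exists j k,
  perm_eq (take i (interleave us vs)) (take j (flatten us) ++ take k (flatten vs)).
Proof.
elim: us vs i => [|u us IH] [|v vs] i /=; try by exists 0, 0; rewrite ?take0.
have [le_iu | lt_ui] := leqP i (size u).
  by exists i, 0; rewrite take0 cats0 !takel_cat.
rewrite -(subnKC (ltnW lt_ui)) take_size_addn_cat.
set i1 := i - size u; have [le_i1v | lt_vi1] := leqP i1 (size v).
  by exists (size u), i1; rewrite !takel_cat // take_size.
rewrite -(subnKC (ltnW lt_vi1)) take_size_addn_cat.
have [j [k perm_rest]] := IH vs (i1 - size v).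
exists (size u + j), (size v + k); rewrite !take_size_addn_cat -!catA perm_cat2l.
by rewrite perm_sym perm_catCA perm_cat2l perm_sym.
Qed.

Lemma in_shuffle_perm w u v : in_shuffle w u v -> perm_eq w (u ++ v).
Proof. by case=> us [vs [_ eq_size <- <- ->]]; exact: perm_interleave. Qed.

Lemma in_shuffle_perm_take i w u v : in_shuffle w u v ->
  exists j k, perm_eq (take i w) (take j u ++ take k v).
Proof. by case=> us [vs [_ _ <- <- ->]]; apply: perm_take_interleave. Qed.

Lemma occ_perm x s t : perm_eq s t -> occ x s = occ x t.
Proof. by move/permP; apply. Qed.

Lemma occ_cat x s t : occ x (s ++ t) = occ x s + occ x t.
Proof. exact: count_cat. Qed.

Lemma occ_le_size x (s : word) : occ x s <= size s.
Proof. exact: count_size. Qed.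

Lemma occ_nseq x k y : occ x (nseq k y) = (y == x) * k.
Proof. by rewrite /occ count_nseq. Qed.

Definition ballot n (w : word) :=
  forall i, n * occ b (take i w) <= occ a (take i w).

Lemma ballot_nil n : ballot n [::].
Proof. by move=> i; rewrite /occ /= muln0. Qed.

Lemma ballot_shuffle n w u v :
  in_shuffle w u v -> ballot n u -> ballot n v -> ballot n w.
Proof.
move=> wuv bal_u bal_v i; have [j [k /occ_perm eq_occ]] := in_shuffle_perm_take i wuv.
by rewrite !eq_occ !occ_cat mulnDr; exact: leq_add.
Qed.

Lemma L_shuf_invariant n I w : {in I, forall u, n %| occ a u /\ ballot n u} ->
  L_shuf I w -> n %| occ a w /\ ballot n w.
Proof.
move=> inv_I /(rtc_inv (P := fun v => n %| occ a v /\ ballot n v)).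
apply; last by split; [exact: dvdn0 | exact: ballot_nil].
move=> v {}w [dvd_v bal_v] [u /inv_I [dvd_u bal_u] wvu]; split.
  by rewrite (occ_perm _ (in_shuffle_perm wvu)) occ_cat dvdn_add.
exact: ballot_shuffle wvu bal_v bal_u.
Qed.

Lemma occ_b_take_nseq_a i k : occ b (take i (nseq k a)) = 0.
Proof. by apply/count_memPn/negP => /mem_take; rewrite mem_nseq andbF. Qed.

Lemma ballot_nseq_a n k : ballot n (nseq k a).
Proof. by move=> i; rewrite occ_b_take_nseq_a muln0. Qed.

Lemma ballot_anb n : ballot n (anb n).
Proof.
move=> i; have [le_in | lt_ni] := leqP i n.
  by rewrite takel_cat ?size_nseq //; apply: ballot_nseq_a.
rewrite -(subnKC (ltnW lt_ni)) /anb -[X in take (X + _)](size_nseq n a).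
rewrite take_size_addn_cat take_oversize ?subn_gt0 //.
by rewrite !occ_cat !occ_nseq /=; lia.
Qed.

Lemma mem_insertion_words n u : u \in [:: anb n; an n] -> occ a u = n /\ ballot n u.
Proof.
rewrite !inE => /orP[] /eqP ->; split.
- by rewrite /anb occ_cat occ_nseq /= mul1n !addn0.
- exact: ballot_anb.
- by rewrite /an occ_nseq mul1n.
- exact: ballot_nseq_a.
Qed.

Lemma ballot_catl n s t : ballot n (s ++ t) -> ballot n s.
Proof.
move=> bal i; have [le_is | lt_si] := leqP i (size s).
  by have := bal i; rewrite takel_cat.
by have := bal (size s); rewrite (take_oversize (ltnW lt_si)) takel_cat // take_size.
Qed.

Lemma ballot_remove_factor n x u y :
  occ a u <= n * occ b u -> ballot n (x ++ u ++ y) -> ballot n (x ++ y).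
Proof.
move=> le_u bal i; have [le_ix | lt_xi] := leqP i (size x).
  by rewrite takel_cat //; apply: (ballot_catl bal).
move: (i - size x) (subnKC (ltnW lt_xi)) => j <-.
have := bal (size x + (size u + j)).
by rewrite !take_size_addn_cat !occ_cat !mulnDr; lia.
Qed.

Lemma nseq_a_or_first_b w :
  (exists m, w = nseq m a) \/ exists m r, w = nseq m a ++ b :: r.
Proof.
elim: w => [|[] w [[m ->] | [m [r ->]]]]; first by left; exists 0.
- by left; exists m.+1.
- by right; exists m.+1, r.
- by right; exists 0, (nseq m a).
- by right; exists 0, (nseq m a ++ b :: r).
Qed.

Lemma ballot_removable_factor n w : 0 < n -> w != [::] -> n %| occ a w -> ballot n w ->
  exists x u y : word, [/\ u \in [:: anb n; an n], w = x ++ u ++ y & ballot n (x ++ y)].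
Proof.
move=> n_gt0 w_nnil dvd_w bal_w.
case: (nseq_a_or_first_b w) => [[m def_w] | [m [r def_w]]]; subst w.
  rewrite occ_nseq mul1n in dvd_w.
  have m_gt0 : 0 < m by case: m w_nnil {dvd_w bal_w}.
  have le_nm := dvdn_leq m_gt0 dvd_w.
  exists (nseq (m - n) a), (an n), [::]; split; last by rewrite cats0; apply: ballot_nseq_a.
    by rewrite !inE eqxx orbT.
  by rewrite cats0 /an -nseqD subnK.
have le_nm : n <= m.
  have := bal_w (size (nseq m a) + 1).
  by rewrite take_size_addn_cat !occ_cat !occ_nseq /occ /= take0 /= mul0n muln1 mul1n !addn0.
exists (nseq (m - n) a), (anb n), r; split.
- by rewrite inE eqxx.
- by rewrite /anb -catA catA -nseqD subnK.
apply: (@ballot_remove_factor _ _ (anb n)); last by rewrite /anb -catA catA -nseqD subnK.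
by rewrite /anb !occ_cat !occ_nseq /=; lia.
Qed.

Lemma L_ins_insert I x u y :
  u \in I -> L_ins I (x ++ y) -> L_ins I (x ++ u ++ y).
Proof. by move=> uI ins_xy; apply: rtc_snoc ins_xy _; exists x, y, u. Qed.

Lemma ballot_L_ins n w : 0 < n -> n %| occ a w -> ballot n w ->
  L_ins [:: anb n; an n] w.
Proof.
move=> n_gt0; have [k] := ubnP (size w); elim: k w => // k IH w lt_wk dvd_w bal_w.
have [-> | w_nnil] := eqVneq w [::]; first exact: rtc_refl.
have [x [u [y [uI def_w bal_xy]]]] := ballot_removable_factor n_gt0 w_nnil dvd_w bal_w.
have [occ_u _] := mem_insertion_words uI.
rewrite def_w; apply: L_ins_insert uI (IH _ _ _ bal_xy).
  have := occ_le_size a u; rewrite occ_u.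
  by move: lt_wk; rewrite def_w !size_cat; lia.
by move: dvd_w; rewrite def_w !occ_cat occ_u addnCA dvdn_addr.
Qed.

Lemma prefix_condition_ballot n w :
  (occ a w %% n = 0 /\
   forall i, i <= size w -> n * occ b (take i w) <= occ a (take i w))
  <-> n %| occ a w /\ ballot n w.
Proof.
rewrite /dvdn; split=> [[/eqP dvd_w bal_w] | [/eqP dvd_w bal_w]]; split=> // i.
have [le_iw | lt_wi] := leqP i (size w); first exact: bal_w.
by have := bal_w (size w) (leqnn _); rewrite take_size (take_oversize (ltnW lt_wi)).
Qed.

Theorem lemma13 (n : nat) (w : word) : 1 <= n ->
  (L_shuf [:: anb n; an n] w <->
     (occ a w %% n = 0 /\
      forall i, i <= size w -> n * occ b (take i w) <= occ a (take i w)))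
  /\ ((occ a w %% n = 0 /\
      forall i, i <= size w -> n * occ b (take i w) <= occ a (take i w))
     <-> L_ins [:: anb n; an n] w).
Proof.
move=> n_gt0.
have shuf_cond : L_shuf [:: anb n; an n] w -> n %| occ a w /\ ballot n w.
  by apply: L_shuf_invariant => u /mem_insertion_words[-> bal_u]; rewrite dvdnn.
have cond_ins : n %| occ a w /\ ballot n w -> L_ins [:: anb n; an n] w.
  by case; apply: ballot_L_ins.
have ins_shuf : L_ins [:: anb n; an n] w -> L_shuf [:: anb n; an n] w.
  exact/rtc_mono/ins_step_shuf_step.
split; split.
- by move/shuf_cond/prefix_condition_ballot.
- by move/prefix_condition_ballot/cond_ins/ins_shuf.
- by move/prefix_condition_ballot/cond_ins.
- by move/ins_shuf/shuf_cond/prefix_condition_ballot.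
Qed.
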